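(* Let $q$ be a prime power, let $\alpha$ be a primitive element of $\mathbb{F}_{q^n}$, and let $\mathcal{F}$ be a flag on $\mathbb{F}_{q^n}$ whose best friend is the subfield $\mathbb{F}_{q^m}$. Let $\beta\in\mathbb{F}_{q^n}^*$ and write $\langle\beta\rangle=\langle\alpha^l\rangle$ with $l$ a divisor of $q^n-1$. If $\mathrm{Orb}_\beta(\mathcal{F})$ is an optimum distance flag code and $t$ is a dimension in the type vector of $\mathcal{F}$, then $m$ divides $t$ and $$\frac{\mathrm{lcm}\left(l,\frac{q^n-1}{q^m-1}\right)}{l}\le\begin{cases}\left\lfloor\frac{q^n-1}{q^t-1}\right\rfloor & \text{if } 2t\le n,\\[4pt] \left\lfloor\frac{q^n-1}{q^{n-t}-1}\right\rfloor & \text{if } 2t>n.\end{cases}$$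
   Context: A flag of type $(t_1,\ldots,t_r)$ on $\mathbb{F}_{q^n}$ is a sequence $(\mathcal{F}_1,\ldots,\mathcal{F}_r)$ of $\mathbb{F}_q$-subspaces with $\{0\}\subsetneq\mathcal{F}_1\subsetneq\cdots\subsetneq\mathcal{F}_r\subsetneq\mathbb{F}_{q^n}$ and $\dim_{\mathbb{F}_q}\mathcal{F}_i=t_i$. For $\beta\in\mathbb{F}_{q^n}^*$ of multiplicative order $|\beta|$, $\mathcal{U}\beta=\{u\beta:u\in\mathcal{U}\}$, $\mathcal{F}\beta=(\mathcal{F}_1\beta,\ldots,\mathcal{F}_r\beta)$ and $\mathrm{Orb}_\beta(\mathcal{F})=\{\mathcal{F}\beta^j:0\le j\le|\beta|-1\}$. A subfield $\mathbb{F}_{q^m}$ is a friend of $\mathcal{F}$ if every $\mathcal{F}_i$ is an $\mathbb{F}_{q^m}$-vector space; the best friend is the largest friend. Subspace distance $d_S(\mathcal{U},\mathcal{V})=\dim(\mathcal{U}+\mathcal{V})-\dim(\mathcal{U}\cap\mathcal{V})$; flag distance $d_f(\mathcal{F},\mathcal{F}')=\sum_i d_S(\mathcal{F}_i,\mathcal{F}'_i)$; the minimum distance of a set of flags is the minimum over distinct pairs ($0$ for a single flag). A set of flags of type $(t_1,\ldots,t_r)$ on $\mathbb{F}_{q^n}$ is an optimum distance flag code if its minimum distance equals $2\left(\sum_{t_i\le\lfloor n/2\rfloor}t_i+\sum_{t_i>\lfloor n/2\rfloor}(n-t_i)\right)$. *)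

From HB Require Import structures.
From mathcomp Require Import all_boot all_order all_algebra all_field.
Set Implicit Arguments. Unset Strict Implicit. Unset Printing Implicit Defensive.
Import GRing.Theory.
Local Open Scope ring_scope.

(* Setting: F = F_q (a finite field, q = #|F|), L = F_{q^n} realised as a
   field extension of F of dimension n = \dim {:L}. *)

Section FlagDefs.
Variables (F : finFieldType) (L : fieldExtType F).

Definition flag := seq {vspace L}.

Definition is_flag (Fl : flag) : Prop :=
  [/\ (0 < size Fl)%N,
      all (fun U => (0 < \dim U)%N && (\dim U < \dim {:L})%N) Fl &
      sorted (fun U V => (U <= V)%VS && (\dim U < \dim V)%N) Fl].

Definition flag_type (Fl : flag) : seq nat := [seq \dim U | U <- Fl].

Definition vs_mul (U : {vspace L}) (beta : L) : {vspace L} := (U * <[beta]>)%VS.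
Definition flag_mul (Fl : flag) (beta : L) : flag := [seq vs_mul U beta | U <- Fl].

(* multiplicative order of beta <> 0 (the least k >= 1 with beta^k = 1);
   any nonzero element of L satisfies beta^(q^n - 1) = 1. *)
Definition mult_order (beta : L) : nat :=
  head 0%N [seq k <- iota 1 (#|F| ^ \dim {:L}) | beta ^+ k == 1].

Definition flag_orbit (beta : L) (Fl : flag) : seq flag :=
  [seq flag_mul Fl (beta ^+ j) | j <- iota 0 (mult_order beta)].

Definition subspace_dist (U V : {vspace L}) : nat :=
  (\dim (U + V) - \dim (U :&: V))%N.

Definition flag_dist (Fl Fl' : flag) : nat :=
  \sum_(i < size Fl) subspace_dist (nth 0%VS Fl i) (nth 0%VS Fl' i).

(* minimum distance over distinct pairs; 0 if there is no such pair *)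
Definition min_dist (C : seq flag) : nat :=
  let ds := [seq flag_dist p.1 p.2 | p <- [seq (a, b) | a <- C, b <- C] & p.1 != p.2] in
  if ds is d :: ds' then foldr minn d ds' else 0%N.

Definition optimum_distance_code (C : seq flag) (ty : seq nat) : Prop :=
  min_dist C = (2 * \sum_(t <- ty)
                   (if (t <= (\dim {:L})./2)%N then t else \dim {:L} - t))%N.

(* K is a friend: every F_i is a K-vector space *)
Definition friend (K : {subfield L}) (Fl : flag) : Prop :=
  all (fun U => (K * U <= U)%VS) Fl.

Definition best_friend (K : {subfield L}) (Fl : flag) : Prop :=
  friend K Fl /\ forall K' : {subfield L}, friend K' Fl -> (K' <= K)%VS.

End FlagDefs.

Arguments is_flag {F L}.
Arguments flag_type {F L}.
Arguments vs_mul {F L}.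
Arguments flag_mul {F L}.
Arguments mult_order {F L}.
Arguments flag_orbit {F L}.
Arguments subspace_dist {F L}.
Arguments flag_dist {F L}.
Arguments min_dist {F L}.
Arguments optimum_distance_code {F L}.
Arguments friend {F L}.
Arguments best_friend {F L}.

From mathcomp Require Import all_boot all_algebra all_field zify.
Import GRing.Theory VectorInternalTheory.
Local Open Scope ring_scope.
Set Implicit Arguments. Unset Strict Implicit. Unset Printing Implicit Defensive.

(* Write a = alpha^l and e = lcm(l, (q^n-1)/(q^m-1))/l.  If Fl a^j = Fl a^k
   with 0 <= j < k < e, then a^(k-j) stabilises every subspace of the flag, hence
   lies in the best friend F_{q^m}; as alpha is primitive this forces e | k - j,
   which is absurd.  So the e flags Fl a^j are distinct codewords, and optimality
   forces every two of them to be at maximal distance in every component.  For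
   a t-dimensional subspace U of the flag, the spaces U a^j then pairwise meet
   trivially if 2t <= n, and pairwise span F_{q^n} if 2t > n, in which case their
   orthogonal complements, of dimension n - t, pairwise meet trivially.  Finally
   e pairwise trivially intersecting r-dimensional subspaces have e (q^r - 1)
   distinct nonzero vectors, so e (q^r - 1) <= q^n - 1. *)

Lemma subn1_expn_gt0 q k : (1 < q)%N -> (0 < k)%N -> (0 < q ^ k - 1)%N.
Proof. by move=> q_gt1 k_gt0; rewrite subn_gt0 -{1}(expn0 q) ltn_exp2l. Qed.

Lemma dvdn_subn1_expn q a b : (a %| b)%N -> (q ^ a - 1 %| q ^ b - 1)%N.
Proof.
by case/dvdnP=> c ->; rewrite mulnC expnM !subn1 (predn_exp (q ^ a)) dvdn_mulr.
Qed.

Lemma dvdn_mul_lcm_div l d s :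
  (0 < l)%N -> (d %| l * s)%N = (lcmn l d %/ l %| s)%N.
Proof.
move=> l_gt0; rewrite -[RHS](dvdn_pmul2r l_gt0) divnK ?dvdn_lcml //.
by rewrite dvdn_lcm [(s * l)%N]mulnC (dvdn_mulr s (dvdnn l)).
Qed.

Lemma prim_root_exp_dvd (R : nzRingType) n c i (z : R) :
  n.-primitive_root z -> (c %| n)%N -> (0 < c)%N -> (z ^+ i) ^+ c = 1 ->
  (n %/ c %| i)%N.
Proof.
move=> z_prim c_dvd_n c_gt0 /eqP; rewrite -exprM -(prim_order_dvd z_prim).
by rewrite -{1}(divnK c_dvd_n) dvdn_pmul2r.
Qed.

Lemma prim_root_neq0 (R : nzRingType) n (z : R) : n.-primitive_root z -> z != 0.
Proof.
move=> z_prim; apply: contra_eq_neq (prim_expr_order z_prim) => ->.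
by rewrite expr0n eqn0Ngt (prim_order_gt0 z_prim) /= eq_sym oner_neq0.
Qed.

Lemma foldr_minn_le d s x : x \in d :: s -> (foldr minn d s <= x)%N.
Proof.
elim: s => [|y s IHs] x_in; first by move: x_in; rewrite inE => /eqP ->.
rewrite /= geq_min; case: (eqVneq x y) => [-> | x_neq_y]; first by rewrite leqnn.
by rewrite IHs ?orbT //; move: x_in; rewrite !inE (negbTE x_neq_y).
Qed.

Section CountSubspaces.
Variables (F : finFieldType) (aT : falgType F).
Local Notation q := #|F|.
Local Notation faT := (finvect_type aT).

Lemma card_vspace_nonzero (U : {vspace aT}) :
  #|[set v : faT | v \in U] :\ 0| = (q ^ \dim U - 1)%N.
Proof.
have := cardsD1 0 [set v : faT | v \in U].
by rewrite inE mem0v cardsE card_vspace add1n => ->; rewrite subn1.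
Qed.

Lemma trivI_subspaces_bound (U : nat -> {vspace aT}) (r e : nat) :
  (forall j, (j < e)%N -> \dim (U j) = r) ->
  (forall j k, (j < k < e)%N -> (U j :&: U k = 0)%VS) ->
  (e * (q ^ r - 1) <= q ^ \dim {:aT} - 1)%N.
Proof.
move=> dimU capU; pose S j := [set v : faT | v \in U j] :\ 0.
have cardS e' : (e' <= e)%N -> #|\bigcup_(j < e') S j| = (e' * (q ^ r - 1))%N.
  elim: e' => [|e' IH] lt_e'e; first by rewrite big_ord0 cards0.
  have disjS : (\bigcup_(j < e') S j) :&: S e' = set0.
    apply/setP => v; rewrite !inE.
    apply/negbTE/negP => /andP[/bigcupP[j _]]; rewrite !inE => /andP[_ vUj].
    case/andP=> nz_v vUe'; case/negP: nz_v; rewrite -memv0 -(capU j e').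
      by rewrite memv_cap vUj.
    by rewrite ltn_ord.
  rewrite big_ord_recr /= cardsU disjS cards0 subn0.
  by rewrite IH ?(ltnW lt_e'e) // card_vspace_nonzero dimU // mulSn addnC.
rewrite -(cardS e) // -(card_vspace_nonzero fullv).
apply/subset_leq_card/subsetP => v /bigcupP[j _]; rewrite !inE => /andP[-> _].
by rewrite memvf.
Qed.

End CountSubspaces.

Section OrthogonalSpace.
Variables (K : fieldType) (vT : vectType K).
Implicit Types U V : {vspace vT}.

(* Orthogonal complement for the dot product of coordinates in the basis
   underlying [vs2mx]. *)
Definition orthv U : {vspace vT} := mx2vs (kermx (vs2mx U)^T).

Lemma dim_orthv U : \dim (orthv U) = (\dim {:vT} - \dim U)%N.
Proof. by rewrite dimvf /dimv mx2vsK mxrank_ker mxrank_tr. Qed.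

Lemma orthv_cap_eq0 U V : (U + V)%VS = fullv -> (orthv U :&: orthv V = 0)%VS.
Proof.
move=> UVf; apply/eqP; rewrite -dimv_eq0 /dimv mx2vsK mxrank_eq0.
set C := capmx _ _.
have CW W : (C <= vs2mx (orthv W))%MS -> vs2mx W *m C^T = 0.
  rewrite mx2vsK sub_kermx => /eqP C_W.
  by rewrite -[vs2mx W]trmxK -trmx_mul C_W trmx0.
have sUV_C : (vs2mx U + vs2mx V <= kermx C^T)%MS.
  by rewrite addsmx_sub !sub_kermx CW ?CW ?eqxx //; [exact: capmxSr | exact: capmxSl].
have full_UV : (1%:M <= vs2mx U + vs2mx V)%MS.
  have := mx2vsK (vs2mx U + vs2mx V)%MS; rewrite -[mx2vs _]/(U + V)%VS UVf.
  by move/eqmxP/andP=> [sub_UV _]; apply: submx_trans sub_UV; rewrite mx2vsK.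
have /sub_kermxP := submx_trans full_UV sUV_C.
by rewrite mul1mx => /(congr1 trmx); rewrite trmxK trmx0 => ->.
Qed.

End OrthogonalSpace.

Section FlagDistance.
Variables (F : finFieldType) (L : fieldExtType F).
Implicit Types (U V W : {vspace L}) (x y z : L) (Fl : flag L) (C : seq (flag L)).
Local Notation n := (\dim {:L}).

Definition max_subspace_dist (t : nat) : nat :=
  (2 * (if t <= n./2 then t else n - t))%N.

Lemma vs_mulA U x y : vs_mul (vs_mul U x) y = vs_mul U (x * y).
Proof. by rewrite /vs_mul -prodvA prodv_line. Qed.

Lemma vs_mul1 U : vs_mul U 1 = U.
Proof. exact: prodv1. Qed.

Lemma dim_vs_mul U x : x != 0 -> \dim (vs_mul U x) = \dim U.
Proof. exact: dim_cosetv. Qed.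

Lemma subspace_dist_le_max V W :
  \dim V = \dim W -> (subspace_dist V W <= max_subspace_dist (\dim V))%N.
Proof.
move=> dimVW; have := dimv_sum_cap V W.
have := dimvS (subvf (V + W)); have := dimvS (capvSl V W).
by rewrite /subspace_dist /max_subspace_dist; case: ifP; lia.
Qed.

Lemma subspace_dist_max_cap V W t : \dim V = t -> \dim W = t ->
  subspace_dist V W = (2 * t)%N -> (V :&: W = 0)%VS.
Proof.
move=> dimV dimW distVW; apply/eqP; rewrite -dimv_eq0.
by move: distVW; have := dimv_sum_cap V W; rewrite /subspace_dist; lia.
Qed.

Lemma subspace_dist_max_sum V W t : \dim V = t -> \dim W = t ->
  subspace_dist V W = (2 * (n - t))%N -> (V + W = fullv)%VS.
Proof.
move=> dimV dimW distVW; apply/eqP; rewrite eqEdim subvf /=.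
have := dimv_sum_cap V W; have := dimvS (subvf (V + W)); have := dimvS (capvSl V W).
by move: distVW; rewrite /subspace_dist; lia.
Qed.

Lemma min_dist_le C a b : a \in C -> b \in C -> a != b ->
  (min_dist C <= flag_dist a b)%N.
Proof.
move=> aC bC neq_ab; rewrite /min_dist; set ds := [seq _ | _ <- _ & _].
have : flag_dist a b \in ds.
  by apply/mapP; exists (a, b); rewrite // mem_filter neq_ab allpairs_f.
by case: ds => // d ds; apply: foldr_minn_le.
Qed.

Lemma flag_dist_mul Fl x y : flag_dist (flag_mul Fl x) (flag_mul Fl y) =
  (\sum_(i < size Fl)
     subspace_dist (vs_mul (nth 0%VS Fl i) x) (vs_mul (nth 0%VS Fl i) y))%N.
Proof.
rewrite /flag_dist size_map; apply: eq_bigr => i _.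
by rewrite !(nth_map 0%VS) ?ltn_ord.
Qed.

Lemma optimum_max_dist C Fl x y :
    optimum_distance_code C (flag_type Fl) ->
    flag_mul Fl x \in C -> flag_mul Fl y \in C ->
    flag_mul Fl x != flag_mul Fl y -> x != 0 -> y != 0 ->
  forall U, U \in Fl ->
    subspace_dist (vs_mul U x) (vs_mul U y) = max_subspace_dist (\dim U).
Proof.
move=> opt xC yC neq_xy x_neq0 y_neq0 U UFl.
pose D (i : 'I_(size Fl)) :=
  subspace_dist (vs_mul (nth 0%VS Fl i) x) (vs_mul (nth 0%VS Fl i) y).
pose M (i : 'I_(size Fl)) := max_subspace_dist (\dim (nth 0%VS Fl i)).
have le_DM i : (D i <= M i)%N.
  by rewrite /M -(dim_vs_mul _ x_neq0) subspace_dist_le_max ?dim_vs_mul.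
have sumDM : (\sum_i D i)%N = (\sum_i M i)%N.
  apply/eqP; rewrite eqn_leq; apply/andP; split; first exact: leq_sum.
  have -> : (\sum_i M i)%N = min_dist C.
    by rewrite opt big_distrr /= /flag_type big_map (big_nth 0%VS) big_mkord.
  by rewrite -flag_dist_mul min_dist_le.
have /forall_inP DM : [forall (i | true), D i == M i].
  by rewrite -(leqif_sum (fun i _ => leqif_eq (le_DM i))).2 sumDM.
have UFl_index : (index U Fl < size Fl)%N by rewrite index_mem.
by have /eqP := DM (Ordinal UFl_index) isT; rewrite /D /M /= nth_index.
Qed.

Lemma flag_mul_eq_stab Fl x y : y != 0 -> flag_mul Fl x = flag_mul Fl y ->
  forall U, U \in Fl -> vs_mul U (x / y) = U.
Proof.
move=> y_neq0 /eq_in_map eq_xy U UFl.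
by rewrite -vs_mulA eq_xy // vs_mulA mulfV // vs_mul1.
Qed.

Lemma best_friend_stab K Fl z : best_friend K Fl ->
  (forall U, U \in Fl -> vs_mul U z = U) -> z \in K.
Proof.
case=> _ K_max z_stab; rewrite -sub_adjoin1v; apply: K_max; apply/allP => U UFl.
apply: agenv_modl; rewrite prodvDl prod1v subv_add subvv prodvC /=.
by rewrite -/(vs_mul U z) z_stab.
Qed.

Lemma subfield_expf_pred (K : {subfield L}) z :
  z \in K -> z != 0 -> z ^+ (#|F| ^ \dim K - 1) = 1.
Proof.
rewrite Fermat's_little_theorem => /eqP zK z_neq0; apply: (mulfI z_neq0).
rewrite mulr1 -exprS subn1 prednK // expn_gt0.
by rewrite (ltn_trans _ (finNzRing_gt1 F)).
Qed.

Lemma mult_order_spec x k : (0 < k <= #|F| ^ n)%N -> x ^+ k = 1 ->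
  (0 < mult_order x)%N /\ x ^+ mult_order x = 1.
Proof.
move=> /andP[k_gt0 k_le] xk; rewrite /mult_order.
have : k \in [seq k <- iota 1 (#|F| ^ n) | x ^+ k == 1].
  by rewrite mem_filter xk eqxx mem_iota add1n ltnS k_gt0 k_le.
case def_s : [seq _ <- _ | _] => [//|h s] _.
have : h \in [seq k <- iota 1 (#|F| ^ n) | x ^+ k == 1] by rewrite def_s mem_head.
by rewrite mem_filter mem_iota => /andP[/eqP -> /andP[]].
Qed.

Lemma mem_flag_orbit beta Fl i : beta != 0 ->
  flag_mul Fl (beta ^+ i) \in flag_orbit beta Fl.
Proof.
move=> beta_neq0; have q_gt1 := finNzRing_gt1 F.
have := subfield_expf_pred (memvf beta : beta \in {:L}%AS) beta_neq0.
case/mult_order_spec => [|ord_gt0 beta_ord].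
  by rewrite subn1_expn_gt0 ?adim_gt0 // leq_subr.
rewrite -(expr_mod i beta_ord); apply: map_f.
by rewrite mem_iota add0n ltn_pmod.
Qed.

Lemma max_dist_family_bound (V : nat -> {vspace L}) (t e : nat) :
    (0 < t < n)%N -> (forall j, \dim (V j) = t) ->
    (forall j k, (j < k < e)%N ->
       subspace_dist (V j) (V k) = max_subspace_dist t) ->
  (e <= if (2 * t <= n)%N then (#|F| ^ n - 1) %/ (#|F| ^ t - 1)
        else (#|F| ^ n - 1) %/ (#|F| ^ (n - t) - 1))%N.
Proof.
move=> /andP[t_gt0 t_lt_n] dimV maxV; have q_gt1 := finNzRing_gt1 F.
move: maxV; rewrite /max_subspace_dist geq_half_double -mul2n.
case: ifP => t_small maxV; rewrite leq_divRL ?subn1_expn_gt0 ?subn_gt0 //.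
  apply: (trivI_subspaces_bound (U := V)) => [j _ | j k jk]; first exact: dimV.
  exact: subspace_dist_max_cap (dimV j) (dimV k) (maxV j k jk).
apply: (trivI_subspaces_bound (U := fun j => orthv (V j))) => [j _ | j k jk].
  by rewrite dim_orthv dimV.
exact/orthv_cap_eq0/(subspace_dist_max_sum (dimV j) (dimV k) (maxV j k jk)).
Qed.

End FlagDistance.

Section OptimumOrbit.
Variables (F : finFieldType) (L : fieldExtType F).
Variables (alpha beta : L) (l : nat) (K : {subfield L}) (Fl : flag L).
Local Notation q := #|F|.
Local Notation n := (\dim {:L}).
Local Notation a := (alpha ^+ l).
Local Notation e := (lcmn l ((q ^ n - 1) %/ (q ^ \dim K - 1)) %/ l)%N.

Hypothesis alpha_prim : (q ^ n - 1).-primitive_root alpha.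
Hypothesis K_best : best_friend K Fl.
Hypothesis beta_neq0 : beta != 0.
Hypothesis l_gt0 : (0 < l)%N.
Hypothesis a_pow_beta : forall j, exists i, a ^+ j = beta ^+ i.
Hypothesis opt : optimum_distance_code (flag_orbit beta Fl) (flag_type Fl).

Let a_neq0 : a != 0 := expf_neq0 l (prim_root_neq0 alpha_prim).

Lemma orbit_flags_neq j k : (j < k < e)%N ->
  flag_mul Fl (a ^+ j) != flag_mul Fl (a ^+ k).
Proof.
case/andP=> lt_jk lt_ke; apply/eqP => eq_jk.
have := flag_mul_eq_stab (expf_neq0 j a_neq0) (esym eq_jk).
rewrite -expfB // => /(best_friend_stab K_best) akj_K.
have q_gt1 := finNzRing_gt1 F.
have := subfield_expf_pred akj_K (expf_neq0 _ a_neq0).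
rewrite -[a ^+ (k - j)]exprM => akj_root.
have := prim_root_exp_dvd alpha_prim (dvdn_subn1_expn _ (field_dimS (subvf K)))
          (subn1_expn_gt0 q_gt1 (adim_gt0 K)) akj_root.
rewrite dvdn_mul_lcm_div // => /dvdn_leq.
by rewrite subn_gt0 lt_jk => /(_ isT)/(leq_trans lt_ke); rewrite ltnNge leq_subr.
Qed.

Lemma orbit_max_dist U j k : U \in Fl -> (j < k < e)%N ->
  subspace_dist (vs_mul U (a ^+ j)) (vs_mul U (a ^+ k)) =
  max_subspace_dist L (\dim U).
Proof.
move=> UFl jke.
have orbit_a i : flag_mul Fl (a ^+ i) \in flag_orbit beta Fl.
  by have [i' ->] := a_pow_beta i; apply: mem_flag_orbit.
by apply: optimum_max_dist opt _ _ (orbit_flags_neq jke) _ _ _ UFl;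
  [exact: orbit_a | exact: orbit_a | exact: expf_neq0 | exact: expf_neq0].
Qed.

End OptimumOrbit.

Theorem theorem4p21 (F : finFieldType) (L : fieldExtType F)
  (alpha beta : L) (l : nat) (K : {subfield L}) (Fl : flag L) (t : nat) :
  let q := #|F| in
  let n := \dim {:L} in
  let m := \dim K in
  (* alpha is a primitive element of F_{q^n} *)
  (q ^ n - 1)%N.-primitive_root alpha ->
  is_flag Fl ->
  best_friend K Fl ->
  beta != 0 ->
  (l %| q ^ n - 1)%N ->
  (* <beta> = <alpha^l> *)
  (forall x : L, (exists i : nat, x = beta ^+ i) <->
                 (exists i : nat, x = (alpha ^+ l) ^+ i)) ->
  optimum_distance_code (flag_orbit beta Fl) (flag_type Fl) ->
  t \in flag_type Fl ->
  (m %| t)%N /\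
  (lcmn l ((q ^ n - 1) %/ (q ^ m - 1)) %/ l <=
     (if (2 * t <= n)%N then (q ^ n - 1) %/ (q ^ t - 1)
      else (q ^ n - 1) %/ (q ^ (n - t) - 1)))%N.
Proof.
move=> q n m alpha_prim [_ Fl_dims _] K_best beta_neq0 l_dvd beta_gen opt.
case/mapP=> U UFl ->; split; first exact: field_module_dimS (allP K_best.1 U UFl).
have l_gt0 : (0 < l)%N := dvdn_gt0 (prim_order_gt0 alpha_prim) l_dvd.
have a_pow_beta j : exists i, (alpha ^+ l) ^+ j = beta ^+ i.
  by apply/beta_gen; exists j.
apply: (max_dist_family_bound (V := fun j => vs_mul U ((alpha ^+ l) ^+ j))).
- exact: (allP Fl_dims U UFl).
- by move=> j; rewrite dim_vs_mul // !expf_neq0 // (prim_root_neq0 alpha_prim).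
- move=> j k.
  exact: (orbit_max_dist alpha_prim K_best beta_neq0 l_gt0 a_pow_beta opt).
Qed.
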